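(* Let $G=(V,E)$ be an infinite graph satisfying the $CDE(n,-K)$ condition for some $n>0$, $K>0$, with $D_\mu<\infty$ and $D_w<\infty$. Let $u$ be a positive solution of the heat equation $\partial_t u=\Delta u$ on $V$. Then for all vertices and all $t>0$, $$\frac{\Gamma(\sqrt{u})}{u}-\frac{\partial_{t}(\sqrt{u})}{\sqrt{u}}\leq \frac{n}{2t}+\sqrt{\tfrac{1}{2}nKD_{\mu}(D_{w}+1)}.$$
   Context: Graphs: $G=(V,E)$ is a connected, locally finite graph; each edge $xy$ carries a weight $w_{xy}>0$ (possibly $w_{xy}\neq w_{yx}$), and $\mu:V\to(0,\infty)$ is a vertex measure. Write $y\sim x$ if $xy\in E$, $\deg(x)=\sum_{y\sim x}w_{xy}<\infty$, $D_\mu=\sup_{x\in V}\deg(x)/\mu(x)$, $D_w=\sup_{x\sim y}\deg(x)/w_{xy}$. The Laplacian is $\Delta f(x)=\frac{1}{\mu(x)}\sum_{y\sim x}w_{xy}(f(y)-f(x))$. The gradient forms are $2\Gamma(f,g)=\Delta(fg)-f\Delta g-g\Delta f$, $2\Gamma_2(f,g)=\Delta\Gamma(f,g)-\Gamma(f,\Delta g)-\Gamma(\Delta f,g)$, $\Gamma(f)=\Gamma(f,f)$, $\Gamma_2(f)=\Gamma_2(f,f)$. The graph satisfies $CDE(n,K)$ ($n>0$, $K\in\mathbb R$) if for every $f:V\to(0,\infty)$ and every vertex, $\widetilde\Gamma_2(f)\ge\frac1n(\Delta f)^2+K\Gamma(f)$, where $\widetilde\Gamma_2(f)=\Gamma_2(f)-\Gamma\big(f,\frac{\Gamma(f)}{f}\big)$.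 A positive solution of the heat equation on a set $U\subset V$ is a function $u:V\times[0,\infty)\to(0,\infty)$, continuously differentiable in $t$, with $\partial_t u(x,t)=\Delta u(\cdot,t)(x)$ for all $x\in U$, $t\ge 0$; here $\sqrt u$, $\Gamma(\sqrt u)$ etc. are taken at each fixed time. *)

From Stdlib Require Import Reals List.
From Coquelicot Require Import Coquelicot.
Open Scope R_scope.

(* A locally finite graph on a vertex type V is given by a neighbour list
   [nbr x] (the finitely many y with y ~ x), edge weights w x y (w_{xy},
   possibly asymmetric) and a vertex measure mu. *)

Definition sum_list {V : Type} (l : list V) (F : V -> R) : R :=
  fold_right (fun y acc => F y + acc) 0 l.

Definition adj {V : Type} (nbr : V -> list V) (x y : V) : Prop := In y (nbr x).

Definition is_graph {V : Type} (nbr : V -> list V) : Prop :=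
  (forall x, NoDup (nbr x)) /\
  (forall x y, adj nbr x y -> adj nbr y x) /\
  (forall x, ~ adj nbr x x).

Inductive reach {V : Type} (nbr : V -> list V) : V -> V -> Prop :=
| reach_refl x : reach nbr x x
| reach_step x y z : adj nbr x y -> reach nbr y z -> reach nbr x z.

Definition connected {V : Type} (nbr : V -> list V) : Prop :=
  forall x y : V, reach nbr x y.

Definition infinite_type (V : Type) : Prop :=
  forall l : list V, exists v, ~ In v l.

Definition weights_ok {V : Type} (nbr : V -> list V) (w : V -> V -> R)
  (mu : V -> R) : Prop :=
  (forall x y, adj nbr x y -> 0 < w x y) /\ (forall x, 0 < mu x).

Definition deg {V : Type} (nbr : V -> list V) (w : V -> V -> R) (x : V) : R :=
  sum_list (nbr x) (fun y => w x y).

Definition is_Dmu {V : Type} nbr w (mu : V -> R) (D : R) : Prop :=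
  is_lub (fun r => exists x, r = deg nbr w x / mu x) D.

Definition is_Dw {V : Type} nbr (w : V -> V -> R) (D : R) : Prop :=
  is_lub (fun r => exists x y, adj nbr x y /\ r = deg nbr w x / w x y) D.

Definition Lap {V : Type} nbr w (mu : V -> R) (f : V -> R) (x : V) : R :=
  / mu x * sum_list (nbr x) (fun y => w x y * (f y - f x)).

Definition Gam {V : Type} nbr w (mu : V -> R) (f g : V -> R) (x : V) : R :=
  (Lap nbr w mu (fun z => f z * g z) x - f x * Lap nbr w mu g x
     - g x * Lap nbr w mu f x) / 2.

Definition Gam2 {V : Type} nbr w (mu : V -> R) (f g : V -> R) (x : V) : R :=
  (Lap nbr w mu (Gam nbr w mu f g) x - Gam nbr w mu f (Lap nbr w mu g) x
     - Gam nbr w mu (Lap nbr w mu f) g x) / 2.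

Definition Gam2t {V : Type} nbr w (mu : V -> R) (f : V -> R) (x : V) : R :=
  Gam2 nbr w mu f f x - Gam nbr w mu f (fun z => Gam nbr w mu f f z / f z) x.

Definition CDE {V : Type} nbr w (mu : V -> R) (n K : R) : Prop :=
  forall f : V -> R, (forall z, 0 < f z) ->
  forall x, Gam2t nbr w mu f x >=
            / n * (Lap nbr w mu f x) ^ 2 + K * Gam nbr w mu f f x.

(* u : V -> [0,oo) -> (0,oo) positive solution of the heat equation on V
   (values at t < 0 are irrelevant); differentiable in t for t > 0 and
   right-differentiable at t = 0, with derivative Delta u(.,t)(x).
   (Continuity of the t-derivative then follows automatically.) *)
Definition heat_solution {V : Type} nbr w (mu : V -> R) (u : V -> R -> R) : Prop :=
  (forall x t, 0 <= t -> 0 < u x t) /\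
  (forall x t, 0 < t -> is_derive (u x) t (Lap nbr w mu (fun y => u y t) x)) /\
  (forall x, filterlim (fun h => (u x h - u x 0) / h) (at_right 0)
               (locally (Lap nbr w mu (fun y => u y 0) x))).

(* Write f = √u(·,t) and Q = -Δf/f.  Since ∂_t u = Δu, one has ∂_t f = Δf + Γ(f)/f,
   and the left-hand side of the estimate is exactly Q.  For 0 < d < T and a cutoff φ
   that drops by at most e along each edge, take a point of a ball × [d,T] where
   φ·(t-d)·Q is maximal.  There Δf <= 0, which bounds every neighbouring value of f by
   D_w f and Γ(f) by (D_w+1) D_μ f²; maximality in space and time, fed through the
   identity 2Γ̃₂(f) = Δ(-fΔf) + (∂_t f)Δf + fΔ(∂_t f) and CDE(n,-K), gives
   2/n H² - H <= A for H = (t-d)Q, with A = T²K(D_w+1)D_μ + O(e).  Solving this quadratic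
   inequality and letting e -> 0, then d -> 0, yields the estimate. *)

From Stdlib Require Import Reals List Lra Lia Classical ClassicalEpsilon.
From Coquelicot Require Import Coquelicot.
Open Scope R_scope.

Section SumList.
Context {V : Type}.
Implicit Types (l : list V) (F G : V -> R).

Lemma sum_list_ext l F G :
  (forall y, In y l -> F y = G y) -> sum_list l F = sum_list l G.
Proof.
  induction l as [|a l IH]; simpl; intros H; [reflexivity|].
  rewrite H, IH; auto.
Qed.

Lemma sum_list_plus l F G :
  sum_list l (fun y => F y + G y) = sum_list l F + sum_list l G.
Proof. induction l as [|a l IH]; simpl; [lra|]. rewrite IH; ring. Qed.

Lemma sum_list_scal l c F :
  sum_list l (fun y => c * F y) = c * sum_list l F.
Proof. induction l as [|a l IH]; simpl; [lra|]. rewrite IH; ring. Qed.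

Lemma sum_list_minus l F G :
  sum_list l (fun y => F y - G y) = sum_list l F - sum_list l G.
Proof. induction l as [|a l IH]; simpl; [lra|]. rewrite IH; ring. Qed.

Lemma sum_list_le l F G :
  (forall y, In y l -> F y <= G y) -> sum_list l F <= sum_list l G.
Proof.
  induction l as [|a l IH]; simpl; intros H; [lra|].
  apply Rplus_le_compat; auto.
Qed.

Lemma sum_list_ge0 l F :
  (forall y, In y l -> 0 <= F y) -> 0 <= sum_list l F.
Proof.
  intros H. replace 0 with (sum_list l (fun _ => 0)).
  - now apply sum_list_le.
  - clear H; induction l as [|a l IH]; simpl; lra.
Qed.

Lemma sum_list_In_le l F y :
  In y l -> (forall z, In z l -> 0 <= F z) -> F y <= sum_list l F.
Proof.
  induction l as [|a l IH]; simpl; intros Hy H; [tauto|].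
  destruct Hy as [<-|Hy].
  - assert (0 <= sum_list l F) by (apply sum_list_ge0; auto). lra.
  - assert (F y <= sum_list l F) by auto. assert (0 <= F a) by auto. lra.
Qed.

End SumList.

Section Laplacian.
Context {V : Type} (nbr : V -> list V) (w : V -> V -> R) (mu : V -> R).
Local Notation Δ := (Lap nbr w mu).
Local Notation Γ := (Gam nbr w mu).
Implicit Types (f g : V -> R).

Lemma Lap_ext f g x : (forall y, f y = g y) -> Δ f x = Δ g x.
Proof. intros H; unfold Lap. f_equal. apply sum_list_ext. intros; rewrite !H; auto. Qed.

Lemma Lap_plus f g x : Δ (fun z => f z + g z) x = Δ f x + Δ g x.
Proof.
  unfold Lap. rewrite <- Rmult_plus_distr_l, <- sum_list_plus. f_equal.
  apply sum_list_ext; intros; ring.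
Qed.

Lemma Lap_scal c f x : Δ (fun z => c * f z) x = c * Δ f x.
Proof.
  unfold Lap.
  replace (c * (/ mu x * sum_list (nbr x) (fun y => w x y * (f y - f x))))
    with (/ mu x * (c * sum_list (nbr x) (fun y => w x y * (f y - f x)))) by ring.
  rewrite <- (sum_list_scal _ c). f_equal. apply sum_list_ext; intros; ring.
Qed.

Lemma Lap_opp f x : Δ (fun z => - f z) x = - Δ f x.
Proof.
  rewrite (Lap_ext _ (fun z => -1 * f z)) by (intros; ring).
  rewrite Lap_scal. ring.
Qed.

Lemma Lap_minus f g x : Δ (fun z => f z - g z) x = Δ f x - Δ g x.
Proof.
  unfold Lap. rewrite <- Rmult_minus_distr_l, <- sum_list_minus. f_equal.
  apply sum_list_ext; intros; ring.
Qed.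

Lemma Lap_eq_sum f x :
  Δ f x = / mu x * (sum_list (nbr x) (fun y => w x y * f y) - f x * deg nbr w x).
Proof.
  unfold Lap, deg. rewrite <- (sum_list_scal _ (f x)), <- sum_list_minus. f_equal.
  apply sum_list_ext; intros; ring.
Qed.

Lemma Lap_sqr f x : Δ (fun z => f z * f z) x = 2 * (f x * Δ f x + Γ f f x).
Proof. unfold Gam. field. Qed.

Lemma Gam_edge_sum f x :
  Γ f f x = / mu x * sum_list (nbr x) (fun y => w x y * (f y - f x) ^ 2) / 2.
Proof.
  rewrite (sum_list_ext _ _
    (fun y => w x y * (f y * f y - f x * f x) - 2 * f x * (w x y * (f y - f x))))
    by (intros; ring).
  rewrite sum_list_minus, sum_list_scal. unfold Gam, Lap, Rdiv. ring.
Qed.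

(* For f = √u, lap_ratio f = Γ(√u)/u - ∂_t√u/√u is the quantity of the theorem,
   and ∂_t u = Δu makes ∂_t f = Δ(f²)/(2f) = sqrt_heat_rate f. *)
Definition lap_ratio f y := - Δ f y / f y.

Definition sqrt_heat_rate f y := Δ f y + Γ f f y / f y.

Lemma Gam2t_identity f x : (forall z, 0 < f z) ->
  2 * Gam2t nbr w mu f x =
  Δ (fun z => - (f z * Δ f z)) x + sqrt_heat_rate f x * Δ f x
  + f x * Δ (sqrt_heat_rate f) x.
Proof.
  intros Hf. unfold Gam2t, Gam2, sqrt_heat_rate.
  rewrite Lap_opp, Lap_plus.
  set (G := Γ f f).
  unfold Gam.
  rewrite (Lap_ext (fun z => f z * (G z / f z)) G) by (intros; field; apply Rgt_not_eq, Hf).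
  rewrite (Lap_ext (fun z => Δ f z * f z) (fun z => f z * Δ f z)) by (intros; ring).
  field. apply Rgt_not_eq, Hf.
Qed.

Section LocalEstimates.
Variable x : V.
Hypothesis mu_x_pos : 0 < mu x.
Hypothesis w_x_pos : forall y, In y (nbr x) -> 0 < w x y.

Lemma deg_ge0 : 0 <= deg nbr w x.
Proof. apply sum_list_ge0. intros y Hy. specialize (w_x_pos y Hy). lra. Qed.

Lemma sum_w_ge0 f : (forall z, 0 < f z) -> 0 <= sum_list (nbr x) (fun y => w x y * f y).
Proof.
  intros Hf. apply sum_list_ge0. intros y Hy.
  specialize (w_x_pos y Hy). specialize (Hf y). nra.
Qed.

Lemma lap_ratio_le_deg f : (forall z, 0 < f z) -> lap_ratio f x <= deg nbr w x / mu x.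
Proof.
  intros Hf. unfold lap_ratio. rewrite Lap_eq_sum.
  pose proof (sum_w_ge0 f Hf). pose proof (Hf x).
  apply (Rmult_le_reg_r (f x * mu x)); [nra|].
  field_simplify; lra.
Qed.

Lemma sum_w_le_of_Lap_nonpos f : Δ f x <= 0 ->
  sum_list (nbr x) (fun y => w x y * f y) <= f x * deg nbr w x.
Proof.
  rewrite Lap_eq_sum. intros HL.
  assert (0 < / mu x) by (apply Rinv_0_lt_compat; lra). nra.
Qed.

Variable Dw : R.
Hypothesis Dw_bound : forall y, In y (nbr x) -> deg nbr w x / w x y <= Dw.

Lemma nbr_le_of_Lap_nonpos f y : (forall z, 0 < f z) -> Δ f x <= 0 ->
  In y (nbr x) -> f y <= Dw * f x.
Proof.
  intros Hf HL Hy.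
  pose proof (w_x_pos y Hy) as Hwy. pose proof (Hf x). pose proof (Hf y).
  assert (Hdeg : deg nbr w x <= Dw * w x y).
  { specialize (Dw_bound y Hy). unfold Rdiv in Dw_bound.
    apply (Rmult_le_reg_r (/ w x y)); [now apply Rinv_0_lt_compat|].
    rewrite Rmult_assoc, Rinv_r; lra. }
  assert (w x y * f y <= sum_list (nbr x) (fun z => w x z * f z)).
  { apply (sum_list_In_le _ (fun z => w x z * f z)); auto.
    intros z Hz. specialize (w_x_pos z Hz). specialize (Hf z). nra. }
  pose proof (sum_w_le_of_Lap_nonpos f HL). nra.
Qed.

Hypothesis Dw_ge0 : 0 <= Dw.

Lemma Gam_le_of_Lap_nonpos f : (forall z, 0 < f z) -> Δ f x <= 0 ->
  2 * Γ f f x <= (Dw + 1) * (deg nbr w x / mu x) * f x ^ 2.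
Proof.
  intros Hf HL. rewrite Gam_edge_sum.
  pose proof (sum_w_le_of_Lap_nonpos f HL). pose proof (Hf x). pose proof deg_ge0.
  assert (Hsum : sum_list (nbr x) (fun y => w x y * (f y - f x) ^ 2)
      <= Dw * f x * sum_list (nbr x) (fun y => w x y * f y) + f x ^ 2 * deg nbr w x).
  { unfold deg. rewrite <- !sum_list_scal, <- sum_list_plus. apply sum_list_le.
    intros y Hy. pose proof (nbr_le_of_Lap_nonpos f y Hf HL Hy).
    pose proof (w_x_pos y Hy). pose proof (Hf y).
    (* drop the cross term, then use f y <= Dw f x *)
    assert ((f y - f x) ^ 2 <= Dw * f x * f y + f x ^ 2) by nra. nra. }
  assert (Dw * f x * sum_list (nbr x) (fun y => w x y * f y) <= Dw * f x * (f x * deg nbr w x))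
    by (apply Rmult_le_compat_l; [apply Rmult_le_pos|]; lra).
  assert (0 < / mu x) by (apply Rinv_0_lt_compat; lra).
  unfold Rdiv. nra.
Qed.

Lemma Lap_mul_Lap_le f s E0 : (forall z, 0 < f z) -> 0 < s -> 0 <= E0 -> Δ f x <= 0 ->
  (forall y, In y (nbr x) -> s * (lap_ratio f y - lap_ratio f x) <= E0) ->
  s * Δ (fun z => - (f z * Δ f z)) x
  <= s * lap_ratio f x * Δ (fun z => f z * f z) x
     + deg nbr w x / mu x * Dw ^ 2 * f x ^ 2 * E0.
Proof.
  intros Hf Hs HE0 HL Hgap.
  set (Q := lap_ratio f) in *.
  assert (Hid : Δ (fun z => - (f z * Δ f z)) x - Q x * Δ (fun z => f z * f z) x
     = / mu x * sum_list (nbr x) (fun y => w x y * (f y ^ 2 * (Q y - Q x)))).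
  { rewrite <- Lap_scal, <- Lap_minus, Lap_eq_sum.
    pose proof (Hf x).
    replace (- (f x * Δ f x) - Q x * (f x * f x)) with 0
      by (unfold Q, lap_ratio; field; lra).
    rewrite Rmult_0_l, Rminus_0_r. f_equal. apply sum_list_ext. intros y _.
    unfold Q, lap_ratio. pose proof (Hf y). field; lra. }
  assert (Hsum : s * sum_list (nbr x) (fun y => w x y * (f y ^ 2 * (Q y - Q x)))
      <= Dw ^ 2 * f x ^ 2 * E0 * deg nbr w x).
  { unfold deg. rewrite <- !sum_list_scal. apply sum_list_le. intros y Hy.
    pose proof (nbr_le_of_Lap_nonpos f y Hf HL Hy). pose proof (w_x_pos y Hy).
    pose proof (Hgap y Hy). pose proof (Hf x). pose proof (Hf y).
    assert (f y ^ 2 <= Dw ^ 2 * f x ^ 2).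
    { assert (0 <= (Dw * f x - f y) * (Dw * f x + f y)) by (apply Rmult_le_pos; lra). nra. }
    assert (f y ^ 2 * (s * (Q y - Q x)) <= f y ^ 2 * E0)
      by (apply Rmult_le_compat_l; [apply pow2_ge_0 | lra]).
    assert (f y ^ 2 * E0 <= Dw ^ 2 * f x ^ 2 * E0) by (apply Rmult_le_compat_r; lra).
    nra. }
  assert (0 < / mu x) by (apply Rinv_0_lt_compat; lra).
  unfold Rdiv. nra.
Qed.

Lemma cde_estimate_at_max f s n K E0 :
  (forall z, 0 < f z) -> 0 < s -> 0 < n -> 0 <= K -> 0 <= E0 ->
  Gam2t nbr w mu f x >= / n * Δ f x ^ 2 + - K * Γ f f x ->
  Δ f x <= 0 ->
  (forall y, In y (nbr x) -> s * (lap_ratio f y - lap_ratio f x) <= E0) ->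
  0 <= lap_ratio f x
       + s * ((Δ f x * sqrt_heat_rate f x - Δ (sqrt_heat_rate f) x * f x) / f x ^ 2) ->
  2 / n * (s * lap_ratio f x) ^ 2 - s * lap_ratio f x
  <= s ^ 2 * K * ((Dw + 1) * (deg nbr w x / mu x))
     + s * (deg nbr w x / mu x * Dw ^ 2 * E0).
Proof.
  intros Hf Hs Hn HK HE0 Hcde HL Hgap Htime.
  pose proof (Gam2t_identity f x Hf) as Hid.
  pose proof (Lap_mul_Lap_le f s E0 Hf Hs HE0 HL Hgap) as HP.
  pose proof (Gam_le_of_Lap_nonpos f Hf HL) as HG.
  rewrite Lap_sqr in HP. pose proof (Hf x) as Hfx.
  unfold lap_ratio, sqrt_heat_rate in *.
  set (a := Δ f x) in *. set (F := f x) in *. set (G := Γ f f x) in *.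
  set (D := deg nbr w x / mu x) in *.
  set (b := Δ (fun z => Δ f z + Γ f f z / f z) x) in *.
  set (P := Δ (fun z => - (f z * Δ f z)) x) in *.
  assert (HF2 : 0 < F ^ 2) by nra.
  assert (Htime' : 0 <= - a * F + s * (a * (a + G / F) - b * F)).
  { replace (- a * F + s * (a * (a + G / F) - b * F))
      with (F ^ 2 * (- a / F + s * ((a * (a + G / F) - b * F) / F ^ 2))) by (field; lra).
    apply Rmult_le_pos; lra. }
  assert (HP' : s * P <= - 2 * s * a * (a + G / F) + D * Dw ^ 2 * F ^ 2 * E0).
  { replace (- 2 * s * a * (a + G / F)) with (s * (- a / F) * (2 * (F * a + G)))
      by (field; lra). exact HP. }
  assert (Hkey : 2 * s / n * a ^ 2 + a * F <= s * K * ((Dw + 1) * D * F ^ 2) + D * Dw ^ 2 * F ^ 2 * E0).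
  { assert (2 * s * Gam2t nbr w mu f x >= 2 * s / n * a ^ 2 - 2 * s * K * G).
    { replace (2 * s / n * a ^ 2 - 2 * s * K * G) with (2 * s * (/ n * a ^ 2 + - K * G))
        by (field; lra).
      apply Rle_ge, Rmult_le_compat_l; lra. }
    assert (s * K * (2 * G) <= s * K * ((Dw + 1) * D * F ^ 2))
      by (apply Rmult_le_compat_l; [apply Rmult_le_pos|]; lra).
    nra. }
  replace (2 / n * (s * (- a / F)) ^ 2 - s * (- a / F))
    with (s / F ^ 2 * (2 * s / n * a ^ 2 + a * F)) by (field; lra).
  replace (s ^ 2 * K * ((Dw + 1) * D) + s * (D * Dw ^ 2 * E0))
    with (s / F ^ 2 * (s * K * ((Dw + 1) * D * F ^ 2) + D * Dw ^ 2 * F ^ 2 * E0))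
    by (field; lra).
  apply Rmult_le_compat_l; [apply Rmult_le_pos; [lra|]; left; apply Rinv_0_lt_compat|]; lra.
Qed.

End LocalEstimates.
End Laplacian.

Lemma is_derive_sum_list {V : Type} (l : list V) (F : V -> R -> R) dF t :
  (forall y, In y l -> is_derive (F y) t (dF y)) ->
  is_derive (fun s => sum_list l (fun y => F y s)) t (sum_list l dF).
Proof.
  induction l as [|a l IH]; simpl; intros H.
  - exact (is_derive_const 0 t).
  - apply (is_derive_plus (F a) (fun s => sum_list l (fun y => F y s))); auto.
Qed.

Lemma is_derive_Lap {V : Type} nbr w (mu : V -> R) (F : V -> R -> R) dF x t :
  (forall y, is_derive (F y) t (dF y)) ->
  is_derive (fun s => Lap nbr w mu (fun y => F y s) x) t (Lap nbr w mu dF x).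
Proof.
  intros H. unfold Lap. apply is_derive_scal.
  apply (is_derive_sum_list (nbr x) (fun y s => w x y * (F y s - F x s))).
  intros y _. apply is_derive_scal. apply (is_derive_minus (F y) (F x)); auto.
Qed.

Lemma is_derive_ge0_at_left_max (g : R -> R) t l r : is_derive g t l -> 0 < r ->
  (forall s, t - r < s < t -> g s <= g t) -> 0 <= l.
Proof.
  intros Hd Hr Hmax. apply is_derive_Reals in Hd.
  destruct (Rle_dec 0 l) as [|Hl]; [assumption|]. exfalso.
  destruct (Hd (- l)) as [[delta Hdelta] Hlim]; [lra|].
  set (h := - Rmin (delta / 2) (r / 2)).
  assert (Hmin : 0 < Rmin (delta / 2) (r / 2)) by (apply Rmin_glb_lt; lra).
  pose proof (Rmin_l (delta / 2) (r / 2)). pose proof (Rmin_r (delta / 2) (r / 2)).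
  assert (Hh : h < 0) by (unfold h; lra).
  specialize (Hlim h (Rlt_not_eq _ _ Hh)).
  rewrite Rabs_left in Hlim by lra.
  assert (Hg : g (t + h) <= g t) by (apply Hmax; unfold h; lra).
  assert (0 <= (g (t + h) - g t) / h).
  { replace ((g (t + h) - g t) / h) with ((g t - g (t + h)) / - h) by (field; lra).
    apply Rdiv_le_0_compat; lra. }
  assert (Habs : Rabs ((g (t + h) - g t) / h - l) < - l) by (apply Hlim; unfold h; simpl; lra).
  rewrite Rabs_right in Habs by lra. lra.
Qed.

Lemma finite_argmax {V : Type} (l : list V) (x : V) (g : V -> R -> R) a b : a <= b ->
  (forall y, In y (x :: l) -> forall c, a <= c <= b -> continuity_pt (g y) c) ->
  exists x1 t1, In x1 (x :: l) /\ a <= t1 <= b /\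
    forall y t, In y (x :: l) -> a <= t <= b -> g y t <= g x1 t1.
Proof.
  intros Hab. revert x. induction l as [|z l IH]; intros x Hc;
    (destruct (continuity_ab_maj (g x) a b Hab) as [M [HM HMab]];
     [intros; apply Hc; simpl; auto|]).
  - exists x, M. split; [simpl; auto|]. split; [assumption|].
    intros y t [<-|[]] Ht. auto.
  - destruct (IH z) as [x2 [t2 [Hx2 [Ht2 H2]]]].
    { intros y Hy; apply Hc; simpl in *; auto. }
    destruct (Rle_dec (g x M) (g x2 t2)).
    + exists x2, t2. split; [simpl; auto|]. split; [assumption|].
      intros y t [<-|Hy] Ht; [specialize (HM t Ht); lra | auto].
    + exists x, M. split; [simpl; auto|]. split; [assumption|].
      intros y t [<-|Hy] Ht; [auto | specialize (H2 y t Hy Ht); lra].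
Qed.

Section Cutoff.
Context {V : Type} (nbr : V -> list V) (x0 : V) (e : R).

Fixpoint ball (k : nat) : list V :=
  match k with
  | O => x0 :: nil
  | S k => ball k ++ flat_map nbr (ball k)
  end.

Definition cutoff_term (k : nat) (x : V) : R :=
  if excluded_middle_informative (In x (ball k)) then 1 - e * INR k else 0.

(* When 1 <= e N, cutoff N x = max(0, 1 - e d(x0, x)) with d the graph distance. *)
Fixpoint cutoff (N : nat) (x : V) : R :=
  match N with
  | O => cutoff_term O x
  | S k => Rmax (cutoff k x) (cutoff_term (S k) x)
  end.

Lemma ball_mono k m x : (k <= m)%nat -> In x (ball k) -> In x (ball m).
Proof. induction 1; auto. intros Hx. simpl. apply in_or_app; left; auto. Qed.

Lemma ball_nbr k x y : In x (ball k) -> In y (nbr x) -> In y (ball (S k)).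
Proof. intros. simpl. apply in_or_app; right. apply in_flat_map. eauto. Qed.

Lemma cutoff_ge_term j N x : (j <= N)%nat -> cutoff_term j x <= cutoff N x.
Proof.
  induction 1; simpl.
  - destruct j; simpl; [lra | apply Rmax_r].
  - eapply Rle_trans; [exact IHle | apply Rmax_l].
Qed.

Lemma cutoff_le N x M : (forall j, (j <= N)%nat -> cutoff_term j x <= M) -> cutoff N x <= M.
Proof.
  induction N; simpl; intros H; [apply H; lia|].
  apply Rmax_lub; [apply IHN; intros; apply H|apply H]; lia.
Qed.

Lemma cutoff_ge0 N x : 0 <= cutoff N x.
Proof.
  eapply Rle_trans; [|apply (cutoff_ge_term 0); lia].
  unfold cutoff_term. destruct excluded_middle_informative; simpl; lra.
Qed.

Lemma cutoff_center N : 0 <= e -> cutoff N x0 = 1.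
Proof.
  intros He. apply Rle_antisym.
  - apply cutoff_le. intros j _. unfold cutoff_term.
    destruct excluded_middle_informative; [|lra].
    pose proof (pos_INR j). nra.
  - eapply Rle_trans; [|apply (cutoff_ge_term 0); lia]. unfold cutoff_term.
    destruct excluded_middle_informative as [_|Hn]; simpl; [lra|].
    exfalso; apply Hn; simpl; auto.
Qed.

Lemma cutoff_le1 N x : 0 <= e -> cutoff N x <= 1.
Proof.
  intros He. apply cutoff_le. intros j _. unfold cutoff_term.
  destruct excluded_middle_informative; [|lra].
  pose proof (pos_INR j). nra.
Qed.

Lemma cutoff_support N x : 0 < cutoff N x -> In x (ball N).
Proof.
  intros H. destruct (classic (In x (ball N))) as [|Hn]; auto.
  exfalso. assert (cutoff N x <= 0); [|lra].
  apply cutoff_le. intros j Hj. unfold cutoff_term.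
  destruct excluded_middle_informative as [Hi|]; [|lra].
  exfalso; apply Hn. eapply ball_mono; eauto.
Qed.

Lemma cutoff_nbr N x y : 1 <= e * INR N -> In y (nbr x) -> cutoff N x - e <= cutoff N y.
Proof.
  intros HN Hy.
  assert (0 < e) by (pose proof (pos_INR N); nra).
  enough (cutoff N x <= cutoff N y + e) by lra.
  apply cutoff_le. intros j Hj. unfold cutoff_term at 1.
  pose proof (cutoff_ge0 N y).
  destruct excluded_middle_informative as [Hi|]; [|lra].
  destruct (Nat.eq_dec j N) as [->|Hne]; [lra|].
  assert (Hterm : cutoff_term (S j) y <= cutoff N y) by (apply cutoff_ge_term; lia).
  unfold cutoff_term in Hterm. rewrite S_INR in Hterm.
  destruct excluded_middle_informative as [_|Hn]; [lra|].
  exfalso; apply Hn. eapply ball_nbr; eauto.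
Qed.

End Cutoff.

Lemma le_of_quadratic_le n A H : 0 < n -> 0 <= A ->
  2 / n * H ^ 2 - H <= A -> H <= n / 2 + sqrt (n / 2 * A).
Proof.
  intros Hn HA HH.
  assert (Hp : 0 <= n / 2 * A) by (apply Rmult_le_pos; lra).
  pose proof (sqrt_pos (n / 2 * A)) as Hr. pose proof (sqrt_sqrt _ Hp) as Hr2.
  set (r := sqrt (n / 2 * A)) in *.
  destruct (Rle_dec H (n / 2 + r)) as [|Hc]; [assumption|]. exfalso.
  assert (HA' : A = 2 / n * (r * r)) by (rewrite Hr2; field; lra).
  assert (E : 2 / n * H ^ 2 - H = 2 / n * ((H - n / 2 - r) * (H + r)) + A + r)
    by (rewrite HA'; field; lra).
  assert (0 < 2 / n * ((H - n / 2 - r) * (H + r))).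
  { apply Rmult_lt_0_compat; [apply Rdiv_lt_0_compat; lra|].
    apply Rmult_lt_0_compat; lra. }
  lra.
Qed.

(* p, q: values of the cutoff at a maximum point and at a neighbour;
   b, a: the corresponding values of the rescaled ratio. *)
Lemma weighted_max_gap p q a b e B n : 0 < n -> 0 < e -> 0 <= q -> p - e <= q ->
  q * a <= p * b -> 0 < b -> a <= B -> b <= B -> n / 2 < p * b ->
  a - b <= 2 * e * B ^ 2 / n.
Proof.
  intros Hn He Hq Hpq Hmax Hb HaB HbB Hpb.
  assert (HR : 0 <= 2 * e * B ^ 2 / n)
    by (apply Rdiv_le_0_compat; [apply Rmult_le_pos; [lra | apply pow2_ge_0] | lra]).
  destruct (Rle_dec a b); [lra|].
  assert (Hp : 0 < p) by nra.
  assert (Hgap : p * (a - b) <= e * B) by nra.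
  assert (HpB : n < 2 * p * B) by nra.
  apply (Rmult_le_reg_r n); [lra|].
  replace (2 * e * B ^ 2 / n * n) with (2 * B * (e * B)) by (field; lra).
  nra.
Qed.

Lemma sqrt_plus_le a b : 0 <= a -> 0 <= b -> sqrt (a + b) <= sqrt a + sqrt b.
Proof.
  intros Ha Hb. pose proof (sqrt_pos a). pose proof (sqrt_pos b).
  rewrite <- (sqrt_pow2 (sqrt a + sqrt b)) by lra. apply sqrt_le_1_alt.
  replace ((sqrt a + sqrt b) ^ 2) with (sqrt a * sqrt a + sqrt b * sqrt b + 2 * sqrt a * sqrt b)
    by ring.
  rewrite !sqrt_sqrt by auto.
  assert (0 <= sqrt a * sqrt b) by (apply Rmult_le_pos; auto). lra.
Qed.

Lemma le_of_le_add_sqrt X Y c : 0 <= c -> (forall e, 0 < e -> X <= Y + sqrt (c * e)) -> X <= Y.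
Proof.
  intros Hc H. apply Rle_plus_epsilon. intros eps Heps.
  assert (He : 0 < eps ^ 2 / (c + 1)) by (apply Rdiv_lt_0_compat; [nra | lra]).
  specialize (H _ He).
  enough (sqrt (c * (eps ^ 2 / (c + 1))) <= eps) by lra.
  apply Rle_trans with (sqrt (eps ^ 2)); [|rewrite sqrt_pow2; lra].
  apply sqrt_le_1_alt. apply (Rmult_le_reg_r (c + 1)); [lra|].
  replace (c * (eps ^ 2 / (c + 1)) * (c + 1)) with (c * eps ^ 2) by (field; lra).
  assert (0 <= eps ^ 2) by apply pow2_ge_0. nra.
Qed.

Lemma le_of_forall_shift_le T Q B : 0 < T -> 0 <= B ->
  (forall d, 0 < d < T -> (T - d) * Q <= B) -> T * Q <= B.
Proof.
  intros HT HB H. apply Rle_plus_epsilon. intros eps Heps.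
  destruct (Rle_lt_dec Q 0) as [HQ|HQ]; [nra|].
  set (d := Rmin (T / 2) (eps / Q)).
  assert (d <= T / 2) by apply Rmin_l.
  assert (d <= eps / Q) by apply Rmin_r.
  assert (Hd : 0 < d) by (apply Rmin_glb_lt; [lra | apply Rdiv_lt_0_compat; lra]).
  specialize (H d ltac:(lra)).
  assert (d * Q <= eps).
  { apply Rle_trans with (eps / Q * Q); [apply Rmult_le_compat_r; lra | right; field; lra]. }
  nra.
Qed.

Section MaxPrinciple.
Context {V : Type} (nbr : V -> list V) (w : V -> V -> R) (mu : V -> R).
Local Notation Δ := (Lap nbr w mu).
Local Notation Q := (lap_ratio nbr w mu).
Local Notation rate := (sqrt_heat_rate nbr w mu).
Variables (n K Dmu Dw : R) (u : V -> R -> R).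
Hypothesis w_pos : forall x y, In y (nbr x) -> 0 < w x y.
Hypothesis mu_pos : forall x, 0 < mu x.
Hypothesis n_pos : 0 < n.
Hypothesis K_pos : 0 < K.
Hypothesis cde : CDE nbr w mu n (- K).
Hypothesis Dmu_bound : forall x, deg nbr w x / mu x <= Dmu.
Hypothesis Dw_bound : forall x y, In y (nbr x) -> deg nbr w x / w x y <= Dw.
Hypothesis Dw_ge0 : 0 <= Dw.
Hypothesis u_pos : forall x t, 0 < t -> 0 < u x t.
Hypothesis u_heat : forall x t, 0 < t -> is_derive (u x) t (Δ (fun y => u y t) x).

Let f t y := sqrt (u y t).

Lemma sqrt_sol_pos t y : 0 < t -> 0 < f t y.
Proof. intros; apply sqrt_lt_R0; auto. Qed.

Lemma degree_ratio_ge0 x : 0 <= deg nbr w x / mu x.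
Proof.
  apply Rdiv_le_0_compat; [apply (deg_ge0 nbr w x (w_pos x)) | apply mu_pos].
Qed.

Lemma is_derive_sqrt_sol x t : 0 < t -> is_derive (fun s => f s x) t (rate (f t) x).
Proof.
  intros Ht. pose proof (sqrt_sol_pos t x Ht).
  replace (rate (f t) x) with (Δ (fun y => u y t) x / (2 * sqrt (u x t))).
  - apply is_derive_sqrt; auto.
  - unfold sqrt_heat_rate.
    rewrite (Lap_ext nbr w mu (fun y => u y t) (fun y => f t y * f t y))
      by (intros y; unfold f; rewrite sqrt_sqrt; [reflexivity | left; auto]).
    rewrite Lap_sqr. unfold f in *. field; lra.
Qed.

Let ratio_rate t y :=
  (Δ (f t) y * rate (f t) y - Δ (rate (f t)) y * f t y) / f t y ^ 2.

Lemma is_derive_lap_ratio_sol x t : 0 < t ->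
  is_derive (fun s => Q (f s) x) t (ratio_rate t x).
Proof.
  intros Ht. pose proof (sqrt_sol_pos t x Ht).
  replace (ratio_rate t x)
    with ((- Δ (rate (f t)) x * f t x - - Δ (f t) x * rate (f t) x) / f t x ^ 2)
    by (unfold ratio_rate; field; lra).
  unfold lap_ratio. apply (is_derive_div (fun s => - Δ (f s) x) (fun s => f s x)).
  - apply (is_derive_opp (fun s => Δ (f s) x)).
    apply (is_derive_Lap nbr w mu (fun y s => f s y)). intros y.
    now apply is_derive_sqrt_sol.
  - now apply is_derive_sqrt_sol.
  - lra.
Qed.

Section AtScale.
Variables (x0 : V) (d T e : R) (N : nat).
Hypothesis d_pos : 0 < d.
Hypothesis d_lt_T : d < T.
Hypothesis e_pos : 0 < e.
Hypothesis N_large : 1 <= e * INR N.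

Let phi := cutoff nbr x0 e N.
Let Phi y t := phi y * ((t - d) * Q (f t) y).
Let E0 := 2 * e * T ^ 2 * Dmu ^ 2 / n.
Let A0 := T ^ 2 * K * (Dw + 1) * Dmu + T * Dmu * Dw ^ 2 * E0.

Lemma Dmu_ge0 : 0 <= Dmu.
Proof. eapply Rle_trans; [apply (degree_ratio_ge0 x0) | apply Dmu_bound]. Qed.

Lemma E0_ge0 : 0 <= E0.
Proof.
  pose proof (pow2_ge_0 T). pose proof (pow2_ge_0 Dmu).
  apply Rdiv_le_0_compat; [|lra].
  apply Rmult_le_pos; [apply Rmult_le_pos; [lra|] |]; assumption.
Qed.

Lemma A0_ge0 : 0 <= A0.
Proof.
  pose proof (pow2_ge_0 T). pose proof (pow2_ge_0 Dw). pose proof Dmu_ge0. pose proof E0_ge0.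
  apply Rplus_le_le_0_compat; apply Rmult_le_pos; try assumption;
    repeat (apply Rmult_le_pos; try assumption); lra.
Qed.

Lemma is_derive_Phi y t : 0 < t ->
  is_derive (Phi y) t (phi y * (Q (f t) y + (t - d) * ratio_rate t y)).
Proof.
  intros Ht. unfold Phi. apply is_derive_scal.
  replace (Q (f t) y + (t - d) * ratio_rate t y)
    with ((1 - 0) * Q (f t) y + (t - d) * ratio_rate t y) by ring.
  apply (is_derive_mult (fun s => s - d) (fun s => Q (f s) y)).
  - apply (is_derive_minus (fun s => s) (fun _ => d));
      [exact (is_derive_id t) | exact (is_derive_const d t)].
  - now apply is_derive_lap_ratio_sol.
  - intros; apply Rmult_comm.
Qed.

Lemma parabolic_max_exists : exists x1 t1, d <= t1 <= T /\
  forall y t, d <= t <= T -> Phi y t <= Phi x1 t1.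
Proof.
  destruct (finite_argmax (ball nbr x0 N) x0 Phi d T) as [x1 [t1 [_ [Ht1 Hmax]]]];
    [lra| |].
  - intros y _ c Hc. apply continuity_pt_filterlim, (ex_derive_continuous (Phi y) c).
    eexists. apply is_derive_Phi. lra.
  - exists x1, t1. split; [exact Ht1|]. intros y t Ht.
    destruct (classic (In y (x0 :: ball nbr x0 N))) as [Hy|Hy]; [now apply Hmax|].
    assert (Hphi : phi y = 0).
    { pose proof (cutoff_ge0 nbr x0 e N y).
      destruct (Rle_lt_dec (phi y) 0); [unfold phi in *; lra|].
      exfalso; apply Hy; right. now apply (cutoff_support nbr x0 e N y). }
    assert (H0 : Phi x0 d <= Phi x1 t1) by (apply Hmax; [left; reflexivity | lra]).
    unfold Phi in *. rewrite Hphi. replace (d - d) with 0 in H0 by ring. lra.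
Qed.

Section AtMax.
Variables (x1 : V) (t1 : R).
Hypothesis t1_range : d <= t1 <= T.
Hypothesis is_max : forall y t, d <= t <= T -> Phi y t <= Phi x1 t1.
Hypothesis max_large : n / 2 < Phi x1 t1.

Lemma max_point_pos : 0 < phi x1 /\ d < t1 /\ 0 < Q (f t1) x1.
Proof.
  unfold Phi in max_large.
  assert (Hp : 0 <= phi x1) by apply cutoff_ge0.
  assert (Hd : d < t1).
  { destruct (Rle_lt_dec t1 d); [|assumption].
    replace (t1 - d) with 0 in max_large by lra. lra. }
  assert (HQ : 0 < Q (f t1) x1).
  { destruct (Rle_lt_dec (Q (f t1) x1) 0) as [HQ|HQ]; [|assumption].
    assert ((t1 - d) * Q (f t1) x1 <= 0) by nra. nra. }
  split; [|split]; try assumption.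
  destruct (Req_dec (phi x1) 0) as [H0|H0]; [rewrite H0 in max_large; lra | lra].
Qed.

Lemma max_point_nbr_gap y : In y (nbr x1) ->
  (t1 - d) * (Q (f t1) y - Q (f t1) x1) <= E0.
Proof.
  intros Hy. destruct max_point_pos as [Hp [Hd HQ]].
  assert (Ht1 : 0 < t1) by lra.
  assert (HQle : forall z, Q (f t1) z <= Dmu).
  { intros z. eapply Rle_trans; [|apply Dmu_bound].
    apply (lap_ratio_le_deg nbr w mu z (mu_pos z) (w_pos z)).
    intros; now apply sqrt_sol_pos. }
  pose proof Dmu_ge0. pose proof (HQle y). pose proof (HQle x1).
  pose proof (is_max y t1 t1_range) as Hyt. unfold Phi in Hyt, max_large.
  replace E0 with (2 * e * (T * Dmu) ^ 2 / n) by (unfold E0; field; lra).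
  rewrite Rmult_minus_distr_l.
  apply (weighted_max_gap (phi x1) (phi y)); try lra.
  - apply cutoff_ge0.
  - now apply cutoff_nbr.
  - apply Rmult_lt_0_compat; lra.
  - apply Rle_trans with ((t1 - d) * Dmu);
      [apply Rmult_le_compat_l | apply Rmult_le_compat_r]; lra.
  - apply Rle_trans with ((t1 - d) * Dmu);
      [apply Rmult_le_compat_l | apply Rmult_le_compat_r]; lra.
Qed.

Lemma max_point_time : 0 <= Q (f t1) x1 + (t1 - d) * ratio_rate t1 x1.
Proof.
  destruct max_point_pos as [Hp [Hd _]].
  apply (Rmult_le_reg_l (phi x1)); [exact Hp|]. rewrite Rmult_0_r.
  apply (is_derive_ge0_at_left_max (Phi x1) t1 _ (t1 - d)); [apply is_derive_Phi; lra | lra |].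
  intros s Hs. apply is_max. lra.
Qed.

Lemma max_point_bound : Phi x1 t1 <= n / 2 + sqrt (n / 2 * A0).
Proof.
  destruct max_point_pos as [Hp [Hd HQ]].
  assert (Ht1 : 0 < t1) by lra.
  assert (Hf : forall z, 0 < f t1 z) by (intros; now apply sqrt_sol_pos).
  assert (HL : Δ (f t1) x1 <= 0).
  { unfold lap_ratio in HQ. pose proof (Hf x1).
    destruct (Rle_lt_dec (Δ (f t1) x1) 0) as [|HL]; [assumption|].
    assert (0 < Δ (f t1) x1 / f t1 x1) by (apply Rdiv_lt_0_compat; auto).
    unfold Rdiv in *. lra. }
  pose proof (cde_estimate_at_max nbr w mu x1 (mu_pos x1) (w_pos x1) Dw (Dw_bound x1) Dw_ge0
    (f t1) (t1 - d) n K E0 Hf ltac:(lra) n_pos ltac:(lra) E0_ge0 (cde (f t1) Hf x1) HL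
    max_point_nbr_gap max_point_time) as Hest.
  assert (Hconst : (t1 - d) ^ 2 * K * ((Dw + 1) * (deg nbr w x1 / mu x1))
      + (t1 - d) * (deg nbr w x1 / mu x1 * Dw ^ 2 * E0) <= A0).
  { pose proof (degree_ratio_ge0 x1). pose proof (Dmu_bound x1). pose proof Dmu_ge0.
    set (D := deg nbr w x1 / mu x1) in *.
    assert ((t1 - d) ^ 2 * D <= T ^ 2 * Dmu)
      by (apply Rmult_le_compat; [apply pow2_ge_0 | lra | apply pow_incr; lra | lra]).
    assert ((t1 - d) * D <= T * Dmu) by (apply Rmult_le_compat; lra).
    assert (0 <= K * (Dw + 1)) by (apply Rmult_le_pos; lra).
    assert (0 <= Dw ^ 2 * E0) by (apply Rmult_le_pos; [apply pow2_ge_0 | apply E0_ge0]).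
    apply Rle_trans with
      (K * (Dw + 1) * ((t1 - d) ^ 2 * D) + Dw ^ 2 * E0 * ((t1 - d) * D)); [right; ring|].
    apply Rle_trans with (K * (Dw + 1) * (T ^ 2 * Dmu) + Dw ^ 2 * E0 * (T * Dmu));
      [|right; unfold A0; ring].
    apply Rplus_le_compat; apply Rmult_le_compat_l; assumption. }
  pose proof (le_of_quadratic_le n A0 ((t1 - d) * Q (f t1) x1) n_pos A0_ge0 ltac:(lra)).
  assert (phi x1 <= 1) by (apply cutoff_le1; lra).
  assert (Phi x1 t1 <= (t1 - d) * Q (f t1) x1).
  { unfold Phi. assert (0 < (t1 - d) * Q (f t1) x1) by (apply Rmult_lt_0_compat; lra). nra. }
  lra.
Qed.

End AtMax.

Lemma rescaled_ratio_bound : (T - d) * Q (f T) x0 <= n / 2 + sqrt (n / 2 * A0).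
Proof.
  destruct parabolic_max_exists as [x1 [t1 [Ht1 Hmax]]].
  replace ((T - d) * Q (f T) x0) with (Phi x0 T)
    by (unfold Phi, phi; rewrite cutoff_center; [ring | lra]).
  apply Rle_trans with (Phi x1 t1); [apply Hmax; lra|].
  destruct (Rle_lt_dec (Phi x1 t1) (n / 2)).
  - pose proof (sqrt_pos (n / 2 * A0)). lra.
  - now apply max_point_bound.
Qed.

End AtScale.

Lemma sqrt_sol_ratio_bound x T : 0 < T ->
  T * Q (fun y => sqrt (u y T)) x <= n / 2 + T * sqrt (/ 2 * n * K * Dmu * (Dw + 1)).
Proof.
  intros HT. change (fun y => sqrt (u y T)) with (f T).
  set (S := sqrt (/ 2 * n * K * Dmu * (Dw + 1))).
  pose proof (Dmu_ge0 x).
  assert (HS : 0 <= T * S) by (apply Rmult_le_pos; [lra | apply sqrt_pos]).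
  apply le_of_forall_shift_le; [lra | lra |]. intros d Hd.
  set (c := n / 2 * (T * Dmu * Dw ^ 2 * (2 * T ^ 2 * Dmu ^ 2 / n))).
  assert (Hc : 0 <= c).
  { unfold c. replace (n / 2 * (T * Dmu * Dw ^ 2 * (2 * T ^ 2 * Dmu ^ 2 / n)))
      with (T ^ 3 * Dmu ^ 3 * Dw ^ 2) by (field; lra).
    apply Rmult_le_pos; [apply Rmult_le_pos|]; try apply pow2_ge_0; apply pow_le; lra. }
  apply (le_of_le_add_sqrt _ _ c Hc). intros e He.
  destruct (INR_archimed e 1) as [N HN]; [lra|].
  pose proof (rescaled_ratio_bound x d T e N (proj1 Hd) (proj2 Hd) He ltac:(lra)) as Hb.
  cbv zeta in Hb.
  set (a := n / 2 * (T ^ 2 * K * (Dw + 1) * Dmu)).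
  assert (Ha : 0 <= a) by (unfold a; repeat apply Rmult_le_pos; try apply pow2_ge_0; lra).
  assert (HaS : sqrt a = T * S).
  { unfold a, S. rewrite <- (sqrt_pow2 T) at 2 by lra. rewrite <- sqrt_mult_alt by apply pow2_ge_0.
    f_equal. field. }
  replace (n / 2 * (T ^ 2 * K * (Dw + 1) * Dmu
                    + T * Dmu * Dw ^ 2 * (2 * e * T ^ 2 * Dmu ^ 2 / n)))
    with (a + c * e) in Hb by (unfold a, c; field; lra).
  pose proof (sqrt_plus_le a (c * e) Ha ltac:(apply Rmult_le_pos; lra)). lra.
Qed.

Lemma harnack_quantity_eq x t : 0 < t ->
  Gam nbr w mu (fun y => sqrt (u y t)) (fun y => sqrt (u y t)) x / u x t
  - Derive (fun s => sqrt (u x s)) t / sqrt (u x t)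
  = Q (fun y => sqrt (u y t)) x.
Proof.
  intros Ht.
  replace (Derive (fun s => sqrt (u x s)) t) with (rate (f t) x)
    by (symmetry; apply is_derive_unique, is_derive_sqrt_sol, Ht).
  change (fun y => sqrt (u y t)) with (f t). change (sqrt (u x t)) with (f t x).
  pose proof (sqrt_sol_pos t x Ht).
  replace (u x t) with (f t x * f t x) by (apply sqrt_sqrt; left; auto).
  unfold sqrt_heat_rate, lap_ratio. field. lra.
Qed.

End MaxPrinciple.

Lemma is_Dw_ge0 {V : Type} (nbr : V -> list V) w Dw :
  (forall x y, adj nbr x y -> 0 < w x y) -> is_Dw nbr w Dw -> 0 <= Dw.
Proof.
  intros Hw [Hub Hlub].
  destruct (classic (exists x y, adj nbr x y)) as [[x [y Hxy]]|Hno].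
  - apply Rle_trans with (deg nbr w x / w x y); [|apply Hub; exists x, y; auto].
    apply Rdiv_le_0_compat; [apply (deg_ge0 nbr w x (Hw x)) | apply Hw, Hxy].
  - enough (Dw <= Dw - 1) by lra.
    apply Hlub. intros r [x [y [Hxy _]]]. exfalso; eauto.
Qed.

Theorem mainTheorem3 (V : Type) (nbr : V -> list V) (w : V -> V -> R)
  (mu : V -> R) (n K Dmu Dw : R) (u : V -> R -> R) :
  is_graph nbr -> connected nbr -> infinite_type V -> weights_ok nbr w mu ->
  0 < n -> 0 < K -> CDE nbr w mu n (- K) ->
  is_Dmu nbr w mu Dmu -> is_Dw nbr w Dw ->
  heat_solution nbr w mu u ->
  forall (x : V) (t : R), 0 < t ->
    Gam nbr w mu (fun y => sqrt (u y t)) (fun y => sqrt (u y t)) x / u x t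
    - Derive (fun s => sqrt (u x s)) t / sqrt (u x t)
    <= n / (2 * t) + sqrt (/ 2 * n * K * Dmu * (Dw + 1)).
Proof.
  intros _ _ _ [Hw Hmu] Hn HK Hcde HDmu HDw [Hpos [Hheat _]] x t Ht.
  assert (Hu : forall y s, 0 < s -> 0 < u y s) by (intros; apply Hpos; lra).
  assert (Hdmu : forall y, deg nbr w y / mu y <= Dmu)
    by (intros y; apply (proj1 HDmu); exists y; reflexivity).
  assert (Hdw : forall y z, adj nbr y z -> deg nbr w y / w y z <= Dw)
    by (intros y z Hyz; apply (proj1 HDw); exists y, z; auto).
  rewrite (harnack_quantity_eq nbr w mu u Hu Hheat x t Ht).
  pose proof (sqrt_sol_ratio_bound nbr w mu n K Dmu Dw u Hw Hmu Hn HK Hcde Hdmu Hdw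
    (is_Dw_ge0 nbr w Dw Hw HDw) Hu Hheat x t Ht) as Hb.
  apply (Rmult_le_reg_l t); [exact Ht|].
  replace (t * (n / (2 * t) + sqrt (/ 2 * n * K * Dmu * (Dw + 1))))
    with (n / 2 + t * sqrt (/ 2 * n * K * Dmu * (Dw + 1))) by (field; lra).
  exact Hb.
Qed.
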